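(* Let $G$ be a bipartite graph with no universal vertex, let $B_0\in\mathcal{B}(G)$ and $v\in B_0$, and suppose $B_0-v\in\mathcal{B}(G-v)$. Then: (i) for every $B\in\mathcal{B}(G)$ with $B-v\in\mathcal{B}(G-v)$ such that $(B,B_0)$ is an arc of $\mathbf{H}(G)$, $(B-v,B_0-v)$ is an arc of $\mathbf{H}(G-v)$; (ii) for every $B\in\mathcal{B}(G)$ with $B-v\in\mathcal{B}(G-v)$ such that $(B_0,B)$ is an arc of $\mathbf{H}(G)$, $(B_0-v,B-v)$ is an arc of $\mathbf{H}(G-v)$.
   Context: For a bipartite graph with color classes $X,Y$, a biclique is a vertex set inducing a complete bipartite subgraph with shores $X(B)=B\cap X$, $Y(B)=B\cap Y$; $\mathcal{B}(G)$ is the set of inclusion-wise maximal bicliques, ordered by $B\preceq B'\iff X(B)\subseteq X(B')$. $\mathbf{H}(G)$ is the transitive reduction of $(\mathcal{B}(G),\preceq)$: arc $(B,B')$ iff $B'$ covers $B$. For $v\in B$, $B-v$ denotes the biclique with vertex set $B\setminus\{v\}$; $G-v$ is $G$ with $v$ deleted. A universal vertex is adjacent to all vertices of the opposite color class. *)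

From mathcomp Require Import all_boot.
Set Implicit Arguments. Unset Strict Implicit. Unset Printing Implicit Defensive.

(* A bipartite graph G is given by a finite vertex type T, a vertex set
   V : {set T}, a colour class X \subset V (the other colour class is
   Y = V :\: X) and a symmetric adjacency relation e whose edges join a
   vertex of X to a vertex of Y inside V. *)
Definition bipartite (T : finType) (V X : {set T}) (e : rel T) : Prop :=
  [/\ X \subset V, symmetric e &
      forall x y, e x y -> [/\ x \in V, y \in V & (x \in X) != (y \in X)]].

Definition universal (T : finType) (V X : {set T}) (e : rel T) (u : T) : Prop :=
  u \in V /\
  (if u \in X then forall y, y \in V :\: X -> e u y
   else forall x, x \in X -> e u x).

Definition no_universal (T : finType) (V X : {set T}) (e : rel T) : Prop :=
  forall u, ~ universal V X e u.

(* B induces a complete bipartite subgraph with shores B :&: X and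
   B :&: (V :\: X) = B :\: X (shores may be empty). *)
Definition biclique (T : finType) (V X : {set T}) (e : rel T) (B : {set T}) : Prop :=
  B \subset V /\ forall x y, x \in B :&: X -> y \in B :\: X -> e x y.

Definition maxbiclique (T : finType) (V X : {set T}) (e : rel T) (B : {set T}) : Prop :=
  biclique V X e B /\
  forall B', biclique V X e B' -> B \subset B' -> B' = B.

Definition bprec (T : finType) (X : {set T}) (B B' : {set T}) : bool :=
  B :&: X \subset B' :&: X.

Definition bstrict (T : finType) (X : {set T}) (B B' : {set T}) : Prop :=
  bprec X B B' /\ B <> B'.

Definition Harc (T : finType) (V X : {set T}) (e : rel T) (B B' : {set T}) : Prop :=
  [/\ maxbiclique V X e B, maxbiclique V X e B', bstrict X B B' &
      ~ exists C, [/\ maxbiclique V X e C, bstrict X B C & bstrict X C B']].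

(* G - v has vertex set V :\ v, colour classes X :\ v and (V :\: X) :\ v,
   and the same adjacency restricted to V :\ v (bicliques are subsets of
   V :\ v, so edges at v are irrelevant). *)

From mathcomp Require Import all_boot.
From Stdlib Require Import Classical.

Set Implicit Arguments.
Unset Strict Implicit.
Unset Printing Implicit Defensive.

(* Every maximal biclique C of G - v lifts to a maximal biclique of G, namely
   v |: C if that is a biclique and C itself otherwise, because any biclique
   of G containing C loses only v when v is deleted.  Deleting v preserves
   the order and is injective on maximal bicliques of G, so a maximal
   biclique of G - v strictly between B - v and B' - v would lift to one
   strictly between B and B'.  The delicate point is that the lift contains
   v when it must: if v is in the X-shore of B and B - v precedes C, every
   vertex of the other shore of C extends B - v to a biclique of G - v, hence
   lies in B by maximality of B - v, and so is adjacent to v. *)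

Section DeleteVertex.
Variables (T : finType) (V X : {set T}) (e : rel T) (v : T).

Lemma setD1_id (A : {set T}) : v \notin A -> A :\ v = A.
Proof.
move=> vA; apply/setP => x; rewrite !inE andb_idl // => xA.
by apply: contraTneq xA => ->.
Qed.

Lemma biclique_setD1 B : biclique V X e B -> biclique (V :\ v) (X :\ v) e (B :\ v).
Proof.
case=> /subsetP sBV eB; split.
  by apply/subsetP => x; rewrite !inE => /andP[-> /sBV ->].
move=> x y; rewrite !inE => /and3P[/andP[_ xB] _ xX] /and3P[yXv yv yB].
by apply: eB; rewrite !inE ?xB ?xX ?yB // andbT; rewrite yv in yXv.
Qed.

Lemma biclique_of_setD1 C : biclique (V :\ v) (X :\ v) e C -> biclique V X e C.
Proof.
case=> /subsetP sCV eC; split.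
  by apply/subsetP => x /sCV /setD1P[].
move=> x y /setIP[xC xX] /setDP[yC yX]; apply: eC.
  by rewrite !inE xC xX andbT; case/setD1P: (sCV x xC).
by rewrite !inE yC (negbTE yX) andbF.
Qed.

Lemma notin_maxbiclique_setD1 C : maxbiclique (V :\ v) (X :\ v) e C -> v \notin C.
Proof. by case=> [[/subsetP sCV _] _]; apply/negP => /sCV; rewrite !inE eqxx. Qed.

Lemma maxbiclique_setD1_inj B B' : maxbiclique V X e B -> maxbiclique V X e B' ->
  B :\ v = B' :\ v -> B = B'.
Proof.
have sup_eq A A' : maxbiclique V X e A -> biclique V X e A' -> v \in A' ->
    A :\ v = A' :\ v -> A' = A.
  case=> _ mA bA' vA' eqA; apply: mA => //; apply/subsetP => x xA.
  by rewrite -(setD1K vA') -eqA !inE xA andbT orbN.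
move=> mB mB' eqB; have [vB'|vB'] := boolP (v \in B').
  exact: esym (sup_eq _ _ mB (proj1 mB') vB' eqB).
have [vB|vB] := boolP (v \in B); first exact: sup_eq _ _ mB' (proj1 mB) vB (esym eqB).
by rewrite -(setD1_id vB) eqB setD1_id.
Qed.

Lemma bprec_setD1 A B : bprec X A B -> bprec (X :\ v) (A :\ v) (B :\ v).
Proof.
move=> /subsetP sAB; apply/subsetP => x; rewrite !inE => /and3P[/andP[xv xA] _ xX].
by have := sAB x; rewrite !inE xA xX xv => /(_ isT) /andP[->].
Qed.

Lemma bprec_of_setD1 A B : bprec (X :\ v) (A :\ v) (B :\ v) ->
  (v \in A -> v \in X -> v \in B) -> bprec X A B.
Proof.
move=> /subsetP sAB vAB; apply/subsetP => x /setIP[xA xX].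
have [xv_eq|xv] := eqVneq x v; first by subst x; rewrite inE xX andbT; exact: vAB.
by have := sAB x; rewrite !inE xv xA xX /= => /(_ isT).
Qed.

Section Lift.
Variable C : {set T}.
Hypothesis maxC : maxbiclique (V :\ v) (X :\ v) e C.

Lemma setD1_biclique_sup B : biclique V X e B -> C \subset B -> B :\ v = C.
Proof.
move=> bB sCB; apply: (proj2 maxC); first exact: biclique_setD1.
apply/subsetP => x xC; rewrite !inE (subsetP sCB x xC) andbT.
by apply: contraTneq xC => ->; apply: notin_maxbiclique_setD1.
Qed.

Lemma maxbiclique_setU1 : biclique V X e (v |: C) -> maxbiclique V X e (v |: C).
Proof.
move=> bvC; split => // B bB svCB.
have vB : v \in B by apply: (subsetP svCB); rewrite setU11.
by rewrite -(setD1K vB) (setD1_biclique_sup bB (subset_trans (subsetUr _ _) svCB)).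
Qed.

Lemma maxbiclique_of_setD1 : ~ biclique V X e (v |: C) -> maxbiclique V X e C.
Proof.
move=> nbvC; split; first exact: biclique_of_setD1 (proj1 maxC).
move=> B bB sCB; have eqB := setD1_biclique_sup bB sCB.
have [vB|vB] := boolP (v \in B); first by case: nbvC; rewrite -eqB setD1K.
by rewrite -eqB setD1_id.
Qed.

Lemma exists_maxbiclique_lift : exists C',
  [/\ maxbiclique V X e C', C' :\ v = C & biclique V X e (v |: C) -> v \in C'].
Proof.
have vC := notin_maxbiclique_setD1 maxC.
have [bvC|nbvC] := classic (biclique V X e (v |: C)).
  by exists (v |: C); rewrite setU1K // setU11; split => //; apply: maxbiclique_setU1.
by exists C; rewrite setD1_id //; split => //; apply: maxbiclique_of_setD1.
Qed.

End Lift.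

Lemma biclique_setU1 D C : biclique V X e D ->
  maxbiclique (V :\ v) (X :\ v) e (D :\ v) -> v \in D -> v \in X ->
  biclique (V :\ v) (X :\ v) e C -> bprec (X :\ v) (D :\ v) C ->
  biclique V X e (v |: C).
Proof.
move=> [/subsetP sDV eD] [_ maxDv] vD vX bC /subsetP sDC.
have [/subsetP sCV _] := bC; have [_ eC'] := biclique_of_setD1 bC.
have yDv y : y \in C :\: X -> y \in D :\ v.
  move=> /setDP[yC yX]; have /setD1P[yv yV] := sCV y yC.
  suff <- : y |: (D :\ v) = D :\ v by rewrite setU11.
  apply: maxDv; last exact: subsetUr.
  split.
    by apply/subsetP => z /setU1P[->|/setD1P[zv /sDV zV]]; rewrite !inE ?yv ?zv.
  move=> a b /setIP[/setU1P[ay|/setD1P[av aD]] /setD1P[_ aX]] /setDP[bvD bXv].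
    by move: aX; rewrite ay (negbTE yX).
  have /setIP[aC _] : a \in C :&: (X :\ v) by apply: sDC; rewrite !inE av aD aX.
  case/setU1P: bvD => [->|/setD1P[bv bD]]; first by apply: eC'; rewrite !inE ?aC ?aX ?yC ?yX.
  by apply: eD; rewrite !inE ?aD ?aX ?bD ?andbT //; rewrite !inE bv in bXv.
split.
  by apply/subsetP => x /setU1P[->|/sCV /setD1P[]//]; apply: sDV.
move=> x y /setIP[/setU1P[->|xC] xX] /setDP[/setU1P[yv|yC] yX].
- by move: yX; rewrite yv vX.
- have /setD1P[_ yD] : y \in D :\ v by apply: yDv; rewrite inE yX yC.
  by apply: eD; rewrite !inE ?vD ?vX ?yD ?yX.
- by move: yX; rewrite yv vX.
- by apply: eC'; rewrite !inE ?xC ?xX ?yC ?yX.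
Qed.

Lemma Harc_setD1 P Q : Harc V X e P Q ->
  maxbiclique (V :\ v) (X :\ v) e (P :\ v) ->
  maxbiclique (V :\ v) (X :\ v) e (Q :\ v) ->
  v \in P :|: Q -> Harc (V :\ v) (X :\ v) e (P :\ v) (Q :\ v).
Proof.
move=> [mP mQ [PQ nPQ] noC] mPv mQv vPQ.
have vQ : v \in X -> v \in Q.
  move=> vX; case/setUP: vPQ => // vP.
  by have := subsetP PQ v; rewrite !inE vP vX => /(_ isT) /andP[].
split => //.
  split; first exact: bprec_setD1.
  by move=> eqPQ; apply: nPQ; apply: maxbiclique_setD1_inj mP mQ eqPQ.
case=> C [mC [PC nPC] [CQ nCQ]].
have [C' [mC' eqC vC']] := exists_maxbiclique_lift mC; subst C.
apply: noC; exists C'; split => //; split.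
- apply: (bprec_of_setD1 PC) => vP vX; apply: vC'.
  exact: biclique_setU1 (proj1 mP) mPv vP vX (proj1 mC) PC.
- by move=> eqPC; apply: nPC; rewrite eqPC.
- by apply: (bprec_of_setD1 CQ) => _ /vQ.
- by move=> eqCQ; apply: nCQ; rewrite eqCQ.
Qed.

End DeleteVertex.

Theorem lemma4 (T : finType) (V X : {set T}) (e : rel T) :
  bipartite V X e -> no_universal V X e ->
  forall (B0 : {set T}) (v : T),
    maxbiclique V X e B0 -> v \in B0 ->
    maxbiclique (V :\ v) (X :\ v) e (B0 :\ v) ->
    (forall B, maxbiclique V X e B -> maxbiclique (V :\ v) (X :\ v) e (B :\ v) ->
       Harc V X e B B0 -> Harc (V :\ v) (X :\ v) e (B :\ v) (B0 :\ v)) /\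
    (forall B, maxbiclique V X e B -> maxbiclique (V :\ v) (X :\ v) e (B :\ v) ->
       Harc V X e B0 B -> Harc (V :\ v) (X :\ v) e (B0 :\ v) (B :\ v)).
Proof.
move=> _ _ B0 v _ vB0 mB0v; split=> B _ mBv arc.
  by apply: Harc_setD1 arc mBv mB0v _; rewrite inE vB0 orbT.
by apply: Harc_setD1 arc mB0v mBv _; rewrite inE vB0.
Qed.
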